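(* Let $M \ge 1$ and $K \ge 1$ be integers, and for each document $j \in \{1,\dots,M\}$ and topic $i \in \{1,\dots,K\}$ let $n_{j\cdot}^i \in \{0,1,2,\dots\}$ be fixed, with $N_j = \sum_{i=1}^K n_{j\cdot}^i$. Let $K_{j+} = |\{ i : n_{j\cdot}^i > 0\}|$. For $\alpha > 0$ define \[ p(\mathbf{Z} \mid \alpha) = \prod_{j=1}^M \frac{\Gamma(\alpha K)}{\Gamma\big(\sum_{i=1}^K n_{j\cdot}^i + \alpha K\big)} \prod_{i=1}^K \frac{\Gamma(n_{j\cdot}^i + \alpha)}{\Gamma(\alpha)}. \] Fix $\lambda > 0$ and set $\alpha = \exp(-\lambda \eta)$. Then, as $\eta \to \infty$, \[ -\log p(\mathbf{Z} \mid \alpha) \sim \eta \lambda \sum_{j=1}^M (K_{j+} - 1). \]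
   Context: Here $\mathbf{Z}$ denotes a fixed assignment of word tokens in $M$ documents to $K$ topics, and $n_{j\cdot}^i$ is the number of tokens in document $j$ assigned to topic $i$; $p(\mathbf{Z}\mid\alpha)$ is the Dirichlet-multinomial likelihood of these assignments under a symmetric Dirichlet$(\alpha)$ prior on per-document topic proportions. The notation $f(\eta) \sim g(\eta)$ means $f(\eta)/g(\eta) \to 1$ as $\eta \to \infty$. *)

From HB Require Import structures.
From mathcomp Require Import all_boot all_order all_algebra.
From mathcomp Require Import all_classical all_reals all_analysis.
Set Implicit Arguments. Unset Strict Implicit. Unset Printing Implicit Defensive.
Import Order.TTheory GRing.Theory Num.Theory.
Import numFieldNormedType.Exports.
Local Open Scope classical_set_scope.
Local Open Scope ring_scope.

(* Euler's Gamma function, Gamma(x) = int_0^oo t^(x-1) e^(-t) dt (for x > 0;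
   only used at positive arguments below). *)
Definition Gamma (R : realType) (x : R) : R :=
  Rintegral lebesgue_measure `]0, +oo[%classic
    (fun t : R => t `^ (x - 1) * expR (- t)).

Definition Kplus (M K : nat) (n : 'I_M -> 'I_K -> nat) (j : 'I_M) : nat :=
  #|[set i : 'I_K | (0 < n j i)%N]|.

Definition pZ (R : realType) (M K : nat) (n : 'I_M -> 'I_K -> nat) (alpha : R) : R :=
  \prod_(j < M)
    (Gamma (alpha * K%:R) / Gamma ((\sum_(i < K) n j i)%:R + alpha * K%:R)
     * \prod_(i < K) (Gamma ((n j i)%:R + alpha) / Gamma alpha)).

(* Splitting the Gamma integral at 1 gives c / x <= Gamma x <= 1 / x + 2^(n+1) n!
   whenever x <= n + 1, so ln (Gamma x) = - ln x + O(1) on (0, 1] and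
   ln (Gamma x) = O(1) on [1, N + 1].  Taking logarithms, document j contributes
     - ln Gamma(alpha K) + ln Gamma(N_j + alpha K)
       - sum_i (ln Gamma(n_j^i + alpha) - ln Gamma(alpha)),
   and with ln alpha = - lam eta only - ln Gamma(alpha K) = - lam eta + O(1) and
   the K_{j+} terms ln Gamma(alpha) = lam eta + O(1) with n_j^i > 0 grow; the rest
   is O(1).  Hence - ln p(Z | alpha) = lam eta sum_j (K_{j+} - 1) + O(1). *)

From HB Require Import structures.
From mathcomp Require Import all_boot all_order all_algebra.
From mathcomp Require Import all_classical all_reals all_analysis.
From mathcomp Require Import measurable_realfun ring lra.
Import Order.TTheory GRing.Theory Num.Theory.
Import numFieldNormedType.Exports.
Local Open Scope classical_set_scope.
Local Open Scope ring_scope.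

Section GammaBounds.
Context {R : realType}.
Local Notation mu := (@lebesgue_measure R).

Let continuous_powR (p t : R) : 0 < t ->
  {for t, continuous (fun s : R => s `^ p)}.
Proof.
move=> t0; have [dp _] := is_derive1_powR p t0.
by apply: differentiable_continuous; apply/derivable1_diffP.
Qed.

Let is_derive_powR_div (x t : R) : 0 < t ->
  is_derive t 1 (fun s : R => x^-1 * s `^ x) (x^-1 * (x * t `^ (x - 1))).
Proof. by move=> t0; apply: is_deriveZ; exact: is_derive1_powR. Qed.

Lemma integral_powR_itvcc (x e : R) : 0 < x -> 0 < e -> e < 1 ->
  (\int[mu]_(t in `[e, 1%R]) (t `^ (x - 1))%:E = ((1 - e `^ x) / x)%:E)%E.
Proof.
move=> x0 e0 e1; pose F s := x^-1 * s `^ x.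
have F_cont t : 0 < t -> {for t, continuous F}.
  move=> t0; have [dF _] := is_derive_powR_div x t t0.
  by apply: differentiable_continuous; apply/derivable1_diffP.
rewrite (_ : (((1 - e `^ x) / x)%:E = (F 1)%:E - (F e)%:E)%E); last first.
  by rewrite /F powR1 -EFinB mulrBl mul1r mulr1 mulrC.
apply: continuous_FTC2 e1 _ _ _.
- apply: continuous_in_subspaceT => t; rewrite inE/= in_itv/= => /andP[et _].
  exact: continuous_powR (lt_le_trans e0 et).
- split.
  + move=> t; rewrite in_itv/= => /andP[et _].
    by have [] := is_derive_powR_div x t (lt_trans e0 et).
  + by apply: cvg_at_right_filter; exact: F_cont.
  + by apply: cvg_at_left_filter; exact: F_cont.
- move=> t; rewrite in_itv/= => /andP[et _].
  rewrite derive1E; have [_ ->] := is_derive_powR_div x t (lt_trans e0 et).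
  by rewrite mulrA mulVf ?mul1r ?gt_eqF.
Qed.

Lemma integral_powR_itvoc01_le (x : R) : 0 < x ->
  (\int[mu]_(t in `]0%R, 1%R]) (t `^ (x - 1))%:E <= (x^-1)%:E)%E.
Proof.
move=> x0; pose F k := `[(k.+2%:R)^-1, 1%R]%classic : set R.
have UF : `]0%R, 1%R]%classic = \bigcup_k F k.
  apply/seteqP; split => t /=.
    rewrite in_itv/= => /andP[t0 t1].
    exists (Num.truncn t^-1) => //; rewrite /F /= in_itv/= t1 andbT.
    rewrite invf_ple ?posrE ?ltr0n ?invr_gt0//.
    by apply/ltW/(lt_trans (truncnS_gt _)); rewrite ltr_nat.
  move=> [k _]; rewrite /F /= !in_itv/= => /andP[kt ->]; rewrite andbT.
  by apply: lt_le_trans kt; rewrite invr_gt0 ltr0n.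
have F_nd : {homo F : n m / (n <= m)%N >-> (n <= m)%O}.
  move=> n m nm; rewrite subsetEset; apply: subset_itvr.
  by rewrite bnd_simp lef_pV2 ?posrE ?ltr0n// ler_nat !ltnS.
have cvF : (\int[mu]_(t in F k) (t `^ (x - 1))%:E)%E @[k --> \oo] -->
    (\int[mu]_(t in \bigcup_k F k) (t `^ (x - 1))%:E)%E.
  apply: ge0_nondecreasing_set_cvg_integral => //.
  - by move=> k; exact: measurable_itv.
  - move=> k; apply: measurableT_comp => //; apply: measurable_funTS.
    exact: measurable_powR.
  - by move=> k t _; rewrite lee_fin powR_ge0.
rewrite UF -(cvg_lim _ cvF)//; apply: lime_le; first exact: cvgP cvF.
apply: nearW => k; rewrite /F integral_powR_itvcc//; last first.
  by rewrite invf_lt1 ?ltr0n// ltr1n.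
by rewrite lee_fin -[leRHS]mul1r ler_wpM2r ?invr_ge0 ?ltW// gerBl powR_ge0.
Qed.

Lemma exprn_le_fact_expR (n : nat) (y : R) : 0 <= y ->
  y ^+ n <= n`!%:R * expR y.
Proof.
move=> y0; case: n => [|m].
  by rewrite expr0 fact0 mul1r; apply: le_trans (expR_ge1Dx y); rewrite lerDl.
rewrite -ler_pdivrMl ?ltr0n ?fact_gt0// mulrC.
by apply: le_trans (expR_ge1Dxn m y0); rewrite lerDr.
Qed.

Lemma measurable_Gamma_integrand (x : R) :
  measurable_fun setT (fun t : R => t `^ (x - 1) * expR (- t)).
Proof.
apply: measurable_funM; first exact: measurable_powR.
by apply: measurableT_comp; [exact: measurable_expR | exact: measurable_funN].
Qed.

Lemma Gamma_integrand_ge0 (x t : R) : 0 <= t `^ (x - 1) * expR (- t).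
Proof. by rewrite mulr_ge0 ?powR_ge0 ?expR_ge0. Qed.

Lemma Gamma_integrand_le_exponential_pdf (x t : R) (n : nat) :
  1 <= t -> x - 1 <= n%:R ->
  t `^ (x - 1) * expR (- t) <= 2 ^+ n.+1 * n`!%:R * exponential_pdf 2^-1 t.
Proof.
move=> t1 xn; have t0 : 0 <= t := le_trans ler01 t1.
have pdfE : 2 ^+ n.+1 * n`!%:R * exponential_pdf 2^-1 t =
    2 ^+ n * n`!%:R * expR (2^-1 * t) * expR (- t).
  rewrite exponential_pdfE // -[RHS]mulrA -expRD.
  by rewrite (_ : 2^-1 * t + - t = - 2^-1 * t) ?exprS; field.
have tn_le : t ^+ n <= 2 ^+ n * n`!%:R * expR (2^-1 * t).
  have -> : t ^+ n = 2 ^+ n * (2^-1 * t) ^+ n.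
    by rewrite -exprMn mulrA divff ?mul1r ?pnatr_eq0.
  rewrite -mulrA ler_wpM2l ?exprn_ge0 //.
  by apply: exprn_le_fact_expR; rewrite mulr_ge0 ?invr_ge0.
rewrite pdfE ler_wpM2r ?expR_ge0 // (le_trans _ tn_le) //.
by rewrite -powR_mulrn // ler_powR.
Qed.

Lemma Gamma_integral_itvoc01_le (x : R) : 0 < x ->
  (\int[mu]_(t in `]0%R, 1%R]) (t `^ (x - 1) * expR (- t))%:E
    <= (x^-1)%:E)%E.
Proof.
move=> x0; apply: le_trans (integral_powR_itvoc01_le x x0).
apply: ge0_le_integral => //.
- by move=> t _; rewrite lee_fin Gamma_integrand_ge0.
- apply: measurableT_comp => //.
  exact: measurable_funTS (measurable_Gamma_integrand x).
- by apply: measurableT_comp => //; apply: measurable_funTS; exact: measurable_powR.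
move=> t /=; rewrite in_itv/= => /andP[t0 _].
by rewrite lee_fin ler_piMr ?powR_ge0// expR_le1 oppr_le0 ltW.
Qed.

Lemma Gamma_integral_tail_le (x : R) (n : nat) : x - 1 <= n%:R ->
  (\int[mu]_(t in `]1%R, +oo[) (t `^ (x - 1) * expR (- t))%:E
     <= (2 ^+ n.+1 * n`!%:R)%:E)%E.
Proof.
move=> xn; set c : R := 2 ^+ n.+1 * n`!%:R.
have c0 : 0 <= c by rewrite mulr_ge0 ?exprn_ge0.
have mpdf : measurable_fun setT (fun t => (c * exponential_pdf 2^-1 t)%:E).
  apply: measurableT_comp => //.
  by apply: measurable_funM => //; exact: measurable_exponential_pdf.
apply: (@le_trans _ _
    (\int[mu]_(t in `]1%R, +oo[) (c * exponential_pdf 2^-1 t)%:E)%E).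
  apply: ge0_le_integral => //.
  - by move=> t _; rewrite lee_fin Gamma_integrand_ge0.
  - apply: measurableT_comp => //.
    exact: measurable_funTS (measurable_Gamma_integrand x).
  - exact: measurable_funTS.
  move=> t /=; rewrite in_itv/= andbT => t1.
  by rewrite lee_fin Gamma_integrand_le_exponential_pdf // ltW.
apply: (@le_trans _ _ (\int[mu]_t (c * exponential_pdf 2^-1 t)%:E)%E).
  apply: ge0_subset_integral => //.
  by move=> t _; rewrite lee_fin mulr_ge0 ?exponential_pdf_ge0.
under eq_integral do rewrite EFinM.
rewrite ge0_integralZl_EFin //.
- by rewrite integral_exponential_pdf ?mule1.
- by move=> t _; rewrite lee_fin exponential_pdf_ge0.
- by apply: measurableT_comp => //; exact: measurable_exponential_pdf.
Qed.

Lemma Gamma_integral_le (x : R) (n : nat) : 0 < x -> x - 1 <= n%:R ->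
  (\int[mu]_(t in `]0%R, +oo[) (t `^ (x - 1) * expR (- t))%:E
     <= (x^-1 + 2 ^+ n.+1 * n`!%:R)%:E)%E.
Proof.
move=> x0 xn; rewrite (@itv_bndbnd_setU _ _ _ (BRight 1%R)) ?bnd_simp //.
rewrite ge0_integral_setU //.
- by rewrite EFinD leeD // ?Gamma_integral_itvoc01_le ?Gamma_integral_tail_le.
- apply: measurableT_comp => //.
  exact: measurable_funTS (measurable_Gamma_integrand x).
- by move=> t _; rewrite lee_fin Gamma_integrand_ge0.
apply/disj_setPS => t [] /=; rewrite !in_itv/= => /andP[_ t1] /andP[+ _].
by rewrite ltNge t1.
Qed.

Lemma Gamma_integral_ge (x : R) : 0 < x ->
  (((expR (-1) * (1 - expR (-1))) / x)%:E <=
   \int[mu]_(t in `]0%R, +oo[) (t `^ (x - 1) * expR (- t))%:E)%E.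
Proof.
(* On [e, 1] the integrand is at least e^-1 t^(x-1), and e ^ x = e^-1. *)
move=> x0; pose e := expR (- x^-1).
have e0 : 0 < e := expR_gt0 _.
have e1 : e < 1 by rewrite expR_lt1 oppr_lt0 invr_gt0.
have ex : e `^ x = expR (-1) by rewrite -expRM mulNr mulVf ?gt_eqF.
apply: (@le_trans _ _
    (\int[mu]_(t in `[e, 1%R]) (expR (-1) * t `^ (x - 1))%:E)%E).
  under eq_integral do rewrite EFinM.
  rewrite ge0_integralZl_EFin //.
  - by rewrite integral_powR_itvcc // ex -EFinM mulrA.
  - by move=> t _; rewrite lee_fin powR_ge0.
  - by apply: measurableT_comp => //; apply: measurable_funTS; exact: measurable_powR.
apply: (@le_trans _ _
    (\int[mu]_(t in `[e, 1%R]) (t `^ (x - 1) * expR (- t))%:E)%E).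
  apply: ge0_le_integral => //.
  - by move=> t _; rewrite lee_fin mulr_ge0 ?powR_ge0 ?expR_ge0.
  - apply: measurableT_comp => //; apply: measurable_funTS.
    by apply: measurable_funM => //; exact: measurable_powR.
  - apply: measurableT_comp => //.
    exact: measurable_funTS (measurable_Gamma_integrand x).
  move=> t /=; rewrite in_itv/= => /andP[_ t1].
  by rewrite lee_fin mulrC ler_wpM2l ?powR_ge0// ler_expR lerN2.
apply: ge0_subset_integral => //.
- apply: measurableT_comp => //.
  exact: measurable_funTS (measurable_Gamma_integrand x).
- by move=> t _; rewrite lee_fin Gamma_integrand_ge0.
move=> t /=; rewrite !in_itv/= => /andP[et _].
by rewrite andbT (lt_le_trans e0 et).
Qed.

Let Gamma_sandwich (x : R) (n : nat) : 0 < x -> x - 1 <= n%:R ->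
  expR (-1) * (1 - expR (-1)) / x <= Gamma x <= x^-1 + 2 ^+ n.+1 * n`!%:R.
Proof.
move=> x0 xn; move: (Gamma_integral_ge x x0) (Gamma_integral_le x n x0 xn).
by rewrite /Gamma /Rintegral; case: (\int[_]_(_ in _) _)%E => //= r; rewrite !lee_fin => -> ->.
Qed.

Lemma Gamma_ge (x : R) : 0 < x -> expR (-1) * (1 - expR (-1)) / x <= Gamma x.
Proof.
move=> x0; have xn : x - 1 <= (Num.truncn x)%:R.
  by rewrite lerBlDr natr1 ltW // truncnS_gt.
by case/andP: (Gamma_sandwich x _ x0 xn).
Qed.

Lemma Gamma_le (x : R) (n : nat) : 0 < x -> x - 1 <= n%:R ->
  Gamma x <= x^-1 + 2 ^+ n.+1 * n`!%:R.
Proof. by move=> x0 xn; case/andP: (Gamma_sandwich x _ x0 xn). Qed.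

Lemma Gamma_gt0 (x : R) : 0 < x -> 0 < Gamma x.
Proof.
move=> x0; apply: lt_le_trans (Gamma_ge x x0).
by rewrite divr_gt0 // mulr_gt0 ?expR_gt0 // subr_gt0 expR_lt1 ltrN10.
Qed.

End GammaBounds.

Lemma ln_prod (R : realType) (I : finType) (F : I -> R) :
  (forall i, 0 < F i) -> ln (\prod_i F i) = \sum_i ln (F i).
Proof.
move=> F0; rewrite (eq_bigr (fun i => expR (ln (F i)))) => [|i _]; last first.
  by rewrite lnK ?posrE.
by rewrite -expR_sum expRK.
Qed.

Lemma ln_Gamma_estimates (R : realType) (B : nat) : exists D : R,
  (forall x, 0 < x -> x <= 1 -> `|ln (Gamma x) + ln x| <= D) /\
  (forall x, 1 <= x -> x - 1 <= B%:R -> `|ln (Gamma x)| <= D).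
Proof.
pose c : R := expR (-1) * (1 - expR (-1)); pose U : R := 2 ^+ B.+1 * B`!%:R.
have c0 : 0 < c by rewrite mulr_gt0 ?expR_gt0 // subr_gt0 expR_lt1 ltrN10.
have U0 : 0 <= U by rewrite mulr_ge0 ?exprn_ge0.
have U1 : 0 < 1 + U by rewrite ltr_pwDl.
have lnU : 0 <= ln (1 + U) by rewrite ln_ge0 // lerDl.
have lnB : 0 <= ln (B.+1%:R : R) by rewrite ln_ge0 // ler1n.
have lnc := ler_norm (- ln c); rewrite normrN in lnc.
have lnc0 := normr_ge0 (ln c).
have lnG_ge x : 0 < x -> ln c - ln x <= ln (Gamma x).
  move=> x0; rewrite -ln_div ?posrE // ler_ln ?posrE ?divr_gt0 ?Gamma_gt0 //.
  exact: Gamma_ge.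
exists (`|ln c| + ln (B.+1%:R) + ln (1 + U)); split=> [x x0 x1 | x x1 xB].
- have G_le : Gamma x <= (1 + U) / x.
    have xB : x - 1 <= B%:R by apply: (@le_trans _ _ 0); rewrite ?subr_le0.
    apply: le_trans (Gamma_le x B x0 xB) _.
    by rewrite mulrDl mul1r lerD2l ler_pMr ?invf_ge1.
  have := lnG_ge x x0.
  have : ln (Gamma x) <= ln (1 + U) - ln x.
    by rewrite -ln_div ?posrE // ler_ln ?posrE ?divr_gt0 ?Gamma_gt0.
  by rewrite ler_norml; lra.
- have x0 : 0 < x := lt_le_trans ltr01 x1.
  have G_le : Gamma x <= 1 + U.
    by apply: le_trans (Gamma_le x B x0 xB) _; rewrite lerD2r invf_le1.
  have : ln (Gamma x) <= ln (1 + U) by rewrite ler_ln ?posrE ?Gamma_gt0.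
  have : ln x <= ln (B.+1%:R : R) by rewrite ler_ln ?posrE ?ltr0n // -natr1 -lerBlDr.
  have := lnG_ge x x0.
  by rewrite ler_norml; lra.
Qed.

Section DocumentLikelihood.
Context {R : realType}.
Variables (G : R -> R) (B : nat) (D : R).
Hypothesis G_gt0 : forall x, 0 < x -> 0 < G x.
Hypothesis lnG_near0 : forall x, 0 < x -> x <= 1 -> `|ln (G x) + ln x| <= D.
Hypothesis lnG_bounded : forall x, 1 <= x -> x - 1 <= B%:R -> `|ln (G x)| <= D.

Definition doc_likelihood {K : nat} (v : 'I_K -> nat) (a : R) : R :=
  G (a * K%:R) / G ((\sum_(i < K) v i)%:R + a * K%:R)
  * \prod_(i < K) (G ((v i)%:R + a) / G a).

Let D_ge0 : 0 <= D.
Proof.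
by apply: le_trans (normr_ge0 _) (lnG_bounded 1 (lexx 1) _); rewrite subrr.
Qed.

Let lnG_shift_bounded (m : nat) (y : R) : (0 < m <= B)%N -> 0 <= y -> y <= 1 ->
  `|ln (G (m%:R + y))| <= D.
Proof.
case/andP=> m0 mB y0 y1; apply: lnG_bounded.
  by rewrite -[leLHS]addr0 lerD // ler1n.
by rewrite -addrA -[leRHS]addr0 lerD ?ler_nat // subr_le0.
Qed.

Lemma ln_G_ratio_estimate (m : nat) (a : R) : (m <= B)%N -> 0 < a -> a <= 1 ->
  `|ln (G a) - ln (G (m%:R + a)) + (if (0 < m)%N then ln a else 0)| <= D + D.
Proof.
move=> mB a0 a1; case: posnP => [-> | m0].
  by rewrite add0r subrr addr0 normr0 addr_ge0.
rewrite addrAC; apply: le_trans (ler_normD _ _) _.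
by rewrite lerD ?lnG_near0 // normrN lnG_shift_bounded ?m0 // ltW.
Qed.

Section OneDocument.
Variables (K : nat) (v : 'I_K -> nat) (a : R).
Hypotheses (K_gt0 : (0 < K)%N) (a_gt0 : 0 < a).
Local Notation N := (\sum_(i < K) v i).

Let GaK_gt0 : 0 < G (a * K%:R). Proof. by rewrite G_gt0 ?mulr_gt0 ?ltr0n. Qed.
Let Gva_gt0 i : 0 < G ((v i)%:R + a). Proof. by rewrite G_gt0 ?ltr_wpDl. Qed.
Let GNaK_gt0 : 0 < G (N%:R + a * K%:R).
Proof. by rewrite G_gt0 ?ltr_wpDl ?mulr_gt0 ?ltr0n. Qed.
Let prod_gt0 : 0 < \prod_(i < K) (G ((v i)%:R + a) / G a).
Proof. by apply: prodr_gt0 => i _; rewrite divr_gt0 ?Gva_gt0 ?G_gt0. Qed.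

Lemma doc_likelihood_gt0 : 0 < doc_likelihood v a.
Proof. exact: mulr_gt0 (divr_gt0 GaK_gt0 GNaK_gt0) prod_gt0. Qed.

Lemma ln_doc_likelihood : ln (doc_likelihood v a) =
  ln (G (a * K%:R)) - ln (G (N%:R + a * K%:R))
  + \sum_(i < K) (ln (G ((v i)%:R + a)) - ln (G a)).
Proof.
rewrite lnM ?posrE ?divr_gt0 // ln_div ?posrE // ln_prod => [|i].
  by congr (_ + _); apply: eq_bigr => i _; rewrite ln_div ?posrE ?Gva_gt0 ?G_gt0.
by rewrite divr_gt0 ?Gva_gt0 ?G_gt0.
Qed.

Lemma ln_doc_likelihood_estimate : (0 < N <= B)%N -> a * K%:R <= 1 ->
  `|- ln (doc_likelihood v a) + (#|[set i | (0 < v i)%N]|%:R - 1) * ln a|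
    <= (D + D) * K.+1%:R + ln K%:R.
Proof.
move=> hN aK1; have /andP[_ NB] := hN.
have aK0 : 0 < a * K%:R by rewrite mulr_gt0 ?ltr0n.
have a1 : a <= 1 by rewrite (le_trans _ aK1) // ler_pMr // ler1n.
have vB i : (v i <= B)%N by apply: leq_trans NB; rewrite (bigD1 i) //= leq_addr.
pose T i := ln (G a) - ln (G ((v i)%:R + a)) + (if (0 < v i)%N then ln a else 0).
have card_ln : #|[set i | (0 < v i)%N]|%:R * ln a =
    \sum_(i < K) (if (0 < v i)%N then ln a else 0).
  rewrite -big_mkcond sumr_const mulr_natl.
  by congr (_ *+ _); apply: eq_card => i; apply/idP/idP; rewrite in_setE.
(* Each topic with a positive count pairs its [ln a] with [ln (G a)]; the extra
   [- ln a] pairs with [ln (G (a * K))]. *)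
have -> : - ln (doc_likelihood v a) + (#|[set i | (0 < v i)%N]|%:R - 1) * ln a =
    (- (ln (G (a * K%:R)) + ln (a * K%:R)) + ln K%:R)
    + ln (G (N%:R + a * K%:R)) + \sum_(i < K) T i.
  have -> : \sum_(i < K) T i = - \sum_(i < K) (ln (G ((v i)%:R + a)) - ln (G a))
      + \sum_(i < K) (if (0 < v i)%N then ln a else 0).
    by rewrite -sumrN -big_split; apply: eq_bigr => i _; rewrite /T opprB.
  rewrite ln_doc_likelihood mulrBl mul1r card_ln lnM ?posrE ?ltr0n //.
  set s := \sum_(i < K) (_ - _); set c := \sum_(i < K) (if _ then _ else _).
  ring.
have lnK0 : 0 <= ln (K%:R : R) by rewrite ln_ge0 // ler1n.
have b1 : `|- (ln (G (a * K%:R)) + ln (a * K%:R)) + ln K%:R| <= D + ln K%:R.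
  by apply: le_trans (ler_normD _ _) _; rewrite normrN (ger0_norm lnK0) lerD2r lnG_near0.
have b2 : `|ln (G (N%:R + a * K%:R))| <= D by rewrite lnG_shift_bounded // ltW.
have b3 : \sum_(i < K) `|T i| <= (D + D) * K%:R.
  rewrite (_ : _ * _ = \sum_(i < K) (D + D)); last by rewrite sumr_const card_ord mulr_natr.
  by apply: ler_sum => i _; rewrite ln_G_ratio_estimate.
apply: le_trans (ler_normD _ _) _.
apply: le_trans (lerD (le_trans (ler_normD _ _) (lerD b1 b2))
  (le_trans (ler_norm_sum _ _ _) b3)) _.
by rewrite -natr1 mulrDr mulr1; lra.
Qed.

End OneDocument.
End DocumentLikelihood.

Lemma cvg_div_of_bounded_linear_error {R : realType} (f : R -> R) (c C : R) :
  c != 0 -> (\forall x \near +oo, `|f x - c * x| <= C) ->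
  f x / (x * c) @[x --> +oo] --> (1 : R).
Proof.
move=> c0 fC; apply/cvgrPdist_le => e e0; near=> x.
have x0 : 0 < x by near: x; apply: nbhs_pinfty_gt; rewrite num_real.
have xC : C / (e * `|c|) <= x.
  by near: x; apply: nbhs_pinfty_ge; rewrite num_real.
have xc0 : x * c != 0 by rewrite mulf_neq0 // gt_eqF.
rewrite (_ : 1 - f x / (x * c) = (c * x - f x) / (x * c)); last first.
  by rewrite mulrBl [c * x]mulrC divff.
rewrite normrM normfV ler_pdivrMr ?normr_gt0 // distrC.
apply: le_trans (_ : C <= _); first by near: x.
by rewrite normrM (gtr0_norm x0) mulrCA -ler_pdivrMr ?mulr_gt0 ?normr_gt0.
Unshelve. all: end_near.
Qed.

Lemma ln_pZ_estimate {R : realType} (M K : nat) (n : 'I_M -> 'I_K -> nat) :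
  (0 < K)%N -> (forall j, 0 < \sum_(i < K) n j i)%N -> exists C : R,
  forall a, 0 < a -> a * K%:R <= 1 ->
  `|- ln (pZ n a) + (\sum_(j < M) ((Kplus n j)%:R - 1)) * ln a| <= C.
Proof.
move=> K0 N0; set B := (\sum_(j < M) \sum_(i < K) n j i)%N.
have [D [lnG_near0 lnG_bounded]] := @ln_Gamma_estimates R B.
exists (((D + D) * K.+1%:R + ln K%:R) *+ M) => a a0 aK1.
have NB j : (0 < \sum_(i < K) n j i <= B)%N by rewrite N0 /B (bigD1 j) //= leq_addr.
rewrite (_ : pZ n a = \prod_j doc_likelihood (@Gamma R) (n j) a) //.
rewrite ln_prod => [|j]; last exact: (doc_likelihood_gt0 _ Gamma_gt0).
rewrite mulr_suml -sumrN -big_split /=.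
apply: le_trans (ler_norm_sum _ _ _) _.
rewrite -[M in X in _ <= X]card_ord -sumr_const; apply: ler_sum => j _.
exact: (ln_doc_likelihood_estimate _ _ _ Gamma_gt0 lnG_near0 lnG_bounded).
Qed.

Theorem lemma1 (R : realType) (M K : nat) (n : 'I_M -> 'I_K -> nat) (lam : R)
  (hM : (1 <= M)%N) (hK : (1 <= K)%N)
  (hN : forall j : 'I_M, (0 < \sum_(i < K) n j i)%N)
  (hS : \sum_(j < M) ((Kplus n j)%:R - 1 : R) != 0)
  (hlam : 0 < lam) :
  (- ln (pZ n (expR (- lam * eta))))
    / (eta * lam * \sum_(j < M) ((Kplus n j)%:R - 1 : R))
    @[eta --> +oo] --> (1 : R).
Proof.
set S := \sum_(j < M) _.
have [C estimate] := @ln_pZ_estimate R M K n hK hN.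
have lamS0 : lam * S != 0 by rewrite mulf_neq0 // gt_eqF.
pose f eta := - ln (pZ n (expR (- lam * eta))).
have -> : (fun eta => f eta / (eta * lam * S)) = fun eta => f eta / (eta * (lam * S)).
  by apply/funext => eta; rewrite mulrA.
apply: (cvg_div_of_bounded_linear_error f _ C lamS0); near=> eta.
have aK1 : expR (- lam * eta) * K%:R <= 1.
  have : ln K%:R / lam <= eta by near: eta; apply: nbhs_pinfty_ge; rewrite num_real.
  rewrite ler_pdivrMr // => lnK_le.
  by rewrite -[K%:R]lnK ?posrE ?ltr0n // -expRD expR_le1; lra.
rewrite (_ : lam * S * eta = - (S * ln (expR (- lam * eta)))); last first.
  by rewrite expRK; ring.
by rewrite opprK estimate ?expR_gt0.
Unshelve. all: end_near.
Qed.
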